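(* Let $G$ be a connected graph of order at least three. If $D$ is a $\gamma_{\rm cer}$-set of $G$ and $D\cap L_G\neq\emptyset$, then $D$ is not a $\gamma$-set of $G$. Equivalently, if $D$ is a $\gamma_{\rm cer}$-set of $G$ and $\gamma(G)=\gamma_{\rm cer}(G)$, then $L_G\cap D=\emptyset$ and $S_G\subseteq D$.
   Context: All graphs are finite and simple. $L_G$ is the set of leaves (vertices of degree one) of $G$ and $S_G$ is the set of supports (vertices adjacent to a leaf). A set $D\subseteq V_G$ is a dominating set of $G$ if every vertex of $V_G-D$ has a neighbor in $D$; $\gamma(G)$ is the minimum cardinality of a dominating set, and a $\gamma$-set is a dominating set of cardinality $\gamma(G)$. A set $D\subseteq V_G$ is a certified dominating set of $G$ if $D$ is a dominating set of $G$ and every vertex of $D$ has either zero or at least two neighbors in $V_G-D$; $\gamma_{\rm cer}(G)$ is the minimum cardinality of a certified dominating set, and a $\gamma_{\rm cer}$-set is a certified dominating set of cardinality $\gamma_{\rm cer}(G)$. *)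

From mathcomp Require Import all_boot.
Set Implicit Arguments. Unset Strict Implicit. Unset Printing Implicit Defensive.

Definition simple_graph (T : finType) (e : rel T) : Prop :=
  symmetric e /\ irreflexive e.

Definition connected_graph (T : finType) (e : rel T) : Prop :=
  forall x y : T, connect e x y.

Definition nbhd (T : finType) (e : rel T) (v : T) : {set T} := [set u | e v u].

Definition deg (T : finType) (e : rel T) (v : T) : nat := #|nbhd e v|.

Definition leaves (T : finType) (e : rel T) : {set T} := [set v | deg e v == 1].

Definition supports (T : finType) (e : rel T) : {set T} :=
  [set v | [exists u, (u \in leaves e) && e v u]].

Definition dominating (T : finType) (e : rel T) (D : {set T}) : Prop :=
  forall v, v \notin D -> exists2 u, u \in D & e v u.

Definition certified_dominating (T : finType) (e : rel T) (D : {set T}) : Prop :=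
  dominating e D /\ (forall v, v \in D -> #|nbhd e v :\: D| != 1).

Definition gamma_set (T : finType) (e : rel T) (D : {set T}) : Prop :=
  dominating e D /\ (forall D' : {set T}, dominating e D' -> #|D| <= #|D'|).

Definition gamma_cer_set (T : finType) (e : rel T) (D : {set T}) : Prop :=
  certified_dominating e D /\
  (forall D' : {set T}, certified_dominating e D' -> #|D| <= #|D'|).

From mathcomp Require Import all_boot.

Set Implicit Arguments.
Unset Strict Implicit.
Unset Printing Implicit Defensive.

(* A leaf l in a certified dominating set D must have its unique neighbour u in
   D as well (otherwise l has exactly one neighbour outside D); but then D :\ l
   still dominates, since l is dominated by u and l dominates only u.  Hence a
   minimum dominating set that is certified contains no leaf.  If moreover no
   leaf lies in a dominating set, every leaf is dominated by its unique
   neighbour, so every support lies in it. *)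

Section Leaves.

Variables (T : finType) (e : rel T).
Hypotheses (e_sym : symmetric e) (e_irr : irreflexive e).

Lemma leafP (l : T) :
  l \in leaves e -> exists2 u, e l u & forall w, e l w -> w = u.
Proof.
rewrite inE /deg => /cards1P [u nbl].
have nbP w : e l w = (w == u) by rewrite -in_set1 -nbl inE.
by exists u => [|w]; rewrite nbP // => /eqP.
Qed.

Lemma certified_leaf_neighbor (D : {set T}) (l u : T) :
  certified_dominating e D -> l \in D -> e l u ->
  (forall w, e l w -> w = u) -> u \in D.
Proof.
move=> [_ cerD] lD elu nbl; apply: contraT => uD.
have : nbhd e l :\: D = [set u].
  apply/setP => w; rewrite !inE; apply/andP/eqP => [[_ /nbl] // | ->].
  by rewrite elu.
by move/eqP: (cerD l lD) => /[swap] ->; rewrite cards1.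
Qed.

Lemma dominating_setD1_leaf (D : {set T}) (l u : T) :
  dominating e D -> l \in D -> u \in D -> e l u ->
  (forall w, e l w -> w = u) -> dominating e (D :\ l).
Proof.
move=> domD lD uD elu nbl w; rewrite !inE negb_and negbK => /orP [/eqP -> | wD].
  exists u => //; rewrite !inE uD andbT.
  by apply: contraTneq elu => ->; rewrite e_irr.
have [x xD ewx] := domD w wD.
exists x => //; rewrite !inE xD andbT.
apply: contraNneq wD => xl; move: ewx; rewrite xl e_sym => /nbl ->.
exact: uD.
Qed.

Lemma certified_gamma_set_leaves (D : {set T}) :
  certified_dominating e D -> gamma_set e D -> D :&: leaves e = set0.
Proof.
move=> cerD [domD minD]; apply/setP => l; rewrite inE in_set0.
apply/andP => -[lD lL]; have [u elu nbl] := leafP lL.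
have uD := certified_leaf_neighbor cerD lD elu nbl.
have := minD _ (dominating_setD1_leaf domD lD uD elu nbl).
by rewrite (cardsD1 l D) lD ltnn.
Qed.

Lemma supports_sub_dominating (D : {set T}) :
  dominating e D -> D :&: leaves e = set0 -> supports e \subset D.
Proof.
move=> domD noleaf; apply/subsetP => s; rewrite inE => /existsP [l /andP [lL esl]].
have lD : l \notin D.
  by apply/negP => lD; move/setP/(_ l): noleaf; rewrite inE lD lL in_set0.
have [u elu nbl] := leafP lL.
have [x xD elx] := domD l lD.
by rewrite (nbl s) -?(nbl x elx) // e_sym.
Qed.

End Leaves.

Lemma gamma_cer_set_gamma_set (T : finType) (e : rel T) (D D0 : {set T}) :
  gamma_cer_set e D -> gamma_set e D0 -> #|D0| = #|D| -> gamma_set e D.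
Proof.
move=> [[domD _] _] [_ minD0] eqD0; split=> // D' /minD0.
by rewrite eqD0.
Qed.

Theorem lemma2p10 (T : finType) (e : rel T) :
  simple_graph e -> connected_graph e -> 2 < #|T| ->
  forall D : {set T}, gamma_cer_set e D ->
    ((D :&: leaves e != set0 -> ~ gamma_set e D) /\
     ((exists2 D0 : {set T}, gamma_set e D0 & #|D0| = #|D|) ->
        D :&: leaves e = set0 /\ supports e \subset D)).
Proof.
move=> [e_sym e_irr] _ _ D gcD; have cerD := gcD.1; have [domD _] := cerD.
split=> [DL gD | [D0 gD0 eqD0]].
  by move/eqP: DL; apply; exact: certified_gamma_set_leaves.
have gD := gamma_cer_set_gamma_set gcD gD0 eqD0.
have noleaf := certified_gamma_set_leaves e_sym e_irr cerD gD.
by split=> //; apply: (supports_sub_dominating e_sym domD noleaf).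
Qed.
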